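(* Consider the explicit scheme on a uniform one-dimensional grid of spacing $h$, \[ \Phi^{1D,e}_{t+dt}(u):=u(\cdot,t)+dt\,F^{1D,e}[u(\cdot,t)], \] i.e. the forward Euler discretization of $u_t=F^{1D}[u]-f$ with $f=0$. If $dt\le(h^4/2)^{1/3}$, then the solution map satisfies the maximum principle \[ \min\Phi^{1D,e}_t(u)\le\Phi^{1D,e}_{t+dt}(u)\le\max\Phi^{1D,e}_t(u). \]
   Context: $F^{1D}[u]=(u_x^2u_{xx})^{1/3}$. With $A(p,q)=(p^2q)^{1/3}$ (real cube root), $A^+(p,q)=A(p^+,q^+)$, $A^-(p,q)=A(p^-,q^-)$, $x^+=\max(x,0)$, $x^-=\min(x,0)$, the (unregularized) scheme is $-F^{1D,e}[u]=A^+(\lvert u_x^h\rvert^+,-u_{xx}^h)+A^-(-\lvert u_x^h\rvert^-,-u_{xx}^h)$, with $\lvert u_x^h\rvert^+=\max\{\frac{u(x)-u(x+h)}h,\frac{u(x)-u(x-h)}h,0\}$, $-\lvert u_x^h\rvert^-=\min\{\frac{u(x)-u(x+h)}h,\frac{u(x)-u(x-h)}h,0\}$, $u_{xx}^h=\frac{u(x+h)-2u(x)+u(x-h)}{h^2}$. $\Phi^{1D,e}_t(u)$ denotes the grid function at time $t$; min and max are over grid points. *)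

From Stdlib Require Import Reals ZArith Lra.
Open Scope R_scope.

Definition cbrt (x : R) : R :=
  if Rlt_dec 0 x then Rpower x (1/3)
  else if Rlt_dec x 0 then - Rpower (- x) (1/3) else 0.

Definition pos_part (x : R) : R := Rmax x 0.
Definition neg_part (x : R) : R := Rmin x 0.

Definition Afun (p q : R) : R := cbrt (p ^ 2 * q).
Definition Aplus (p q : R) : R := Afun (pos_part p) (pos_part q).
Definition Aminus (p q : R) : R := Afun (neg_part p) (neg_part q).

(* Grid functions on the uniform grid h*Z: u i is the value at x = i*h. *)
Definition grid := Z -> R.

Definition fwd_diff (h : R) (u : grid) (i : Z) : R := (u i - u (i + 1)%Z) / h.
Definition bwd_diff (h : R) (u : grid) (i : Z) : R := (u i - u (i - 1)%Z) / h.

Definition absux_plus (h : R) (u : grid) (i : Z) : R :=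
  Rmax (Rmax (fwd_diff h u i) (bwd_diff h u i)) 0.
Definition neg_absux_minus (h : R) (u : grid) (i : Z) : R :=
  Rmin (Rmin (fwd_diff h u i) (bwd_diff h u i)) 0.
Definition uxx (h : R) (u : grid) (i : Z) : R :=
  (u (i + 1)%Z - 2 * u i + u (i - 1)%Z) / h ^ 2.

(* F^{1D,e}[u] at grid point i (the scheme gives -F). *)
Definition F1De (h : R) (u : grid) (i : Z) : R :=
  - (Aplus (absux_plus h u i) (- uxx h u i)
     + Aminus (neg_absux_minus h u i) (- uxx h u i)).

Definition Phi_step (h dt : R) (u : grid) : grid :=
  fun i => u i + dt * F1De h u i.

(* The scheme is odd under u |-> -u, so it suffices to prove the lower bound.
   At a grid point with value u_i, write P = |u_x^h|^+ and s = -u_xx^h. The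
   A^- term is a cube root of a nonpositive number and can only raise the value,
   while p, q <= P gives s <= 2P/h, hence A^+(P, s)^3 <= 2P^3/h. Under
   2 dt^3 <= h^4, which is the time-step restriction, this makes
   dt A^+(P, s) <= h P, and h P <= u_i - min u by definition of P. *)

From Stdlib Require Import Reals ZArith Lra.
Open Scope R_scope.

Lemma pow3_le_reg (a b : R) : 0 <= b -> a ^ 3 <= b ^ 3 -> a <= b.
Proof.
  intros Hb Hab. destruct (Rle_or_lt a b) as [Hle | Hlt]; [exact Hle |].
  assert (Hgap : 0 < (a - b) * (a * a + a * b + b * b))
    by (apply Rmult_lt_0_compat; nra).
  simpl in Hab. nra.
Qed.

Lemma Rpower_third_pow3 (x : R) : 0 < x -> Rpower x (1/3) ^ 3 = x.
Proof.
  intro Hx.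
  rewrite <- Rpower_pow by (unfold Rpower; apply exp_pos).
  rewrite Rpower_mult.
  replace (1/3 * INR 3) with 1 by (simpl; field).
  exact (Rpower_1 x Hx).
Qed.

Lemma pow3_le_of_le_Rpower_third (x y : R) :
  0 < x -> 0 <= y -> y <= Rpower x (1/3) -> y ^ 3 <= x.
Proof.
  intros Hx Hy Hyx.
  rewrite <- (Rpower_third_pow3 x Hx).
  apply pow_incr; lra.
Qed.

Lemma cbrt_opp (x : R) : cbrt (- x) = - cbrt x.
Proof.
  unfold cbrt.
  destruct (Rlt_dec 0 (- x)); destruct (Rlt_dec 0 x); try lra.
  - destruct (Rlt_dec x 0); [now rewrite Ropp_involutive | lra].
  - destruct (Rlt_dec (- x) 0); [now rewrite Ropp_involutive | lra].
  - destruct (Rlt_dec (- x) 0); destruct (Rlt_dec x 0); lra.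
Qed.

Lemma cbrt_nonneg (x : R) : 0 <= x -> 0 <= cbrt x.
Proof.
  intro Hx. unfold cbrt.
  destruct (Rlt_dec 0 x); [unfold Rpower; left; apply exp_pos |].
  destruct (Rlt_dec x 0); lra.
Qed.

Lemma cbrt_pow3 (x : R) : cbrt x ^ 3 = x.
Proof.
  destruct (Rtotal_order x 0) as [Hx | [Hx | Hx]].
  - rewrite <- (Ropp_involutive x), cbrt_opp.
    replace ((- cbrt (- x)) ^ 3) with (- cbrt (- x) ^ 3) by ring.
    unfold cbrt. destruct (Rlt_dec 0 (- x)); [| lra].
    now rewrite Rpower_third_pow3 by lra.
  - subst x. unfold cbrt.
    destruct (Rlt_dec 0 0); [lra |]. destruct (Rlt_dec 0 0); [lra | ring].
  - unfold cbrt. destruct (Rlt_dec 0 x); [| lra].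
    exact (Rpower_third_pow3 x Hx).
Qed.

Lemma mul_cbrt_le (c x b : R) :
  0 <= c -> 0 <= b -> c ^ 3 * x <= b ^ 3 -> c * cbrt x <= b.
Proof.
  intros Hc Hb Hcxb. apply pow3_le_reg; [exact Hb |].
  now rewrite Rpow_mult_distr, cbrt_pow3.
Qed.

Lemma neg_part_opp (x : R) : neg_part x = - pos_part (- x).
Proof.
  unfold neg_part, pos_part.
  rewrite Ropp_Rmax, Ropp_involutive, Ropp_0. reflexivity.
Qed.

Lemma Aplus_nonneg (p q : R) : 0 <= Aplus p q.
Proof.
  apply cbrt_nonneg, Rmult_le_pos; [apply pow2_ge_0 | apply Rmax_r].
Qed.

Lemma Aminus_opp (p q : R) : Aminus p q = - Aplus (- p) (- q).
Proof.
  unfold Aminus, Aplus, Afun.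
  rewrite !neg_part_opp, <- cbrt_opp. f_equal. ring.
Qed.

Lemma Aminus_nonpos (p q : R) : Aminus p q <= 0.
Proof. rewrite Aminus_opp. pose proof (Aplus_nonneg (- p) (- q)). lra. Qed.

Lemma Aplus_step_bound (h dt P s : R) :
  0 < h -> 0 <= dt -> 2 * dt ^ 3 <= h ^ 4 -> 0 <= P -> s <= 2 * P / h ->
  dt * Aplus P s <= h * P.
Proof.
  intros Hh Hdt Hcfl HP Hs.
  unfold Aplus, Afun.
  replace (pos_part P) with P by (unfold pos_part; symmetry; apply Rmax_left; lra).
  set (s' := pos_part s).
  assert (Hs' : 0 <= s' <= 2 * P / h).
  { unfold s', pos_part. split; [apply Rmax_r |].
    apply Rmax_lub; [exact Hs |].
    apply Rmult_le_pos; [lra | left; apply Rinv_0_lt_compat; exact Hh]. }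
  assert (Hhs' : h * s' <= 2 * P).
  { destruct Hs' as [_ Hs'].
    apply Rmult_le_compat_l with (r := h) in Hs'; [| lra].
    replace (h * (2 * P / h)) with (2 * P) in Hs' by (field; lra). exact Hs'. }
  apply mul_cbrt_le; [exact Hdt | apply Rmult_le_pos; lra |].
  (* dt^3 P^2 s' <= (h^4 / 2) P^2 (2P / h) = (h P)^3 *)
  apply Rmult_le_reg_l with (2 * h); [lra |].
  assert (Hd3 : 0 <= dt ^ 3) by (apply pow_le; exact Hdt).
  assert (HP2 : 0 <= P ^ 2) by apply pow2_ge_0.
  replace (2 * h * (dt ^ 3 * (P ^ 2 * s'))) with ((2 * dt ^ 3) * P ^ 2 * (h * s')) by ring.
  replace (2 * h * (h * P) ^ 3) with (h ^ 4 * P ^ 2 * (2 * P)) by ring.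
  apply Rmult_le_compat.
  - apply Rmult_le_pos; lra.
  - apply Rmult_le_pos; lra.
  - apply Rmult_le_compat_r; lra.
  - exact Hhs'.
Qed.

Definition grid_opp (u : grid) : grid := fun j => - u j.

Section GridDifferences.

Variables (h : R) (u : grid) (i : Z).

Lemma fwd_diff_opp : fwd_diff h (grid_opp u) i = - fwd_diff h u i.
Proof. unfold fwd_diff, grid_opp, Rdiv. ring. Qed.

Lemma bwd_diff_opp : bwd_diff h (grid_opp u) i = - bwd_diff h u i.
Proof. unfold bwd_diff, grid_opp, Rdiv. ring. Qed.

Lemma uxx_opp : uxx h (grid_opp u) i = - uxx h u i.
Proof. unfold uxx, grid_opp, Rdiv. ring. Qed.

Lemma absux_plus_opp : absux_plus h (grid_opp u) i = - neg_absux_minus h u i.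
Proof.
  unfold absux_plus, neg_absux_minus.
  now rewrite fwd_diff_opp, bwd_diff_opp, !Ropp_Rmin, Ropp_0.
Qed.

Lemma neg_absux_minus_opp : neg_absux_minus h (grid_opp u) i = - absux_plus h u i.
Proof.
  unfold absux_plus, neg_absux_minus.
  now rewrite fwd_diff_opp, bwd_diff_opp, !Ropp_Rmax, Ropp_0.
Qed.

Lemma F1De_opp : F1De h (grid_opp u) i = - F1De h u i.
Proof.
  unfold F1De.
  rewrite absux_plus_opp, neg_absux_minus_opp, uxx_opp, !Aminus_opp, !Ropp_involutive.
  ring.
Qed.

Lemma absux_plus_nonneg : 0 <= absux_plus h u i.
Proof. apply Rmax_r. Qed.

Hypothesis h_pos : 0 < h.

Lemma opp_uxx_le_absux_plus : - uxx h u i <= 2 * absux_plus h u i / h.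
Proof.
  assert (Hfwd : fwd_diff h u i <= absux_plus h u i)
    by (unfold absux_plus; eapply Rle_trans; [apply Rmax_l | apply Rmax_l]).
  assert (Hbwd : bwd_diff h u i <= absux_plus h u i)
    by (unfold absux_plus; eapply Rle_trans; [apply Rmax_r | apply Rmax_l]).
  replace (- uxx h u i) with ((fwd_diff h u i + bwd_diff h u i) / h)
    by (unfold uxx, fwd_diff, bwd_diff; field; lra).
  unfold Rdiv. apply Rmult_le_compat_r; [left; apply Rinv_0_lt_compat |]; lra.
Qed.

Lemma mul_absux_plus_le (m : R) :
  m <= u i -> m <= u (i + 1)%Z -> m <= u (i - 1)%Z ->
  h * absux_plus h u i <= u i - m.
Proof.
  intros Hi Hnext Hprev.
  unfold absux_plus. rewrite <- !RmaxRmult by lra.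
  replace (h * fwd_diff h u i) with (u i - u (i + 1)%Z) by (unfold fwd_diff; field; lra).
  replace (h * bwd_diff h u i) with (u i - u (i - 1)%Z) by (unfold bwd_diff; field; lra).
  repeat apply Rmax_lub; lra.
Qed.

End GridDifferences.

Lemma Phi_step_opp (h dt : R) (u : grid) (i : Z) :
  Phi_step h dt (grid_opp u) i = - Phi_step h dt u i.
Proof. unfold Phi_step. rewrite F1De_opp. unfold grid_opp. ring. Qed.

Lemma Phi_step_ge (h dt m : R) (u : grid) (i : Z) :
  0 < h -> 0 <= dt -> 2 * dt ^ 3 <= h ^ 4 ->
  m <= u i -> m <= u (i + 1)%Z -> m <= u (i - 1)%Z ->
  m <= Phi_step h dt u i.
Proof.
  intros Hh Hdt Hcfl Hi Hnext Hprev.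
  unfold Phi_step, F1De.
  assert (Hplus : dt * Aplus (absux_plus h u i) (- uxx h u i) <= h * absux_plus h u i)
    by (apply Aplus_step_bound; auto using absux_plus_nonneg, opp_uxx_le_absux_plus).
  pose proof (mul_absux_plus_le h u i Hh m Hi Hnext Hprev).
  assert (Hminus : dt * Aminus (neg_absux_minus h u i) (- uxx h u i) <= 0)
    by (rewrite <- (Rmult_0_r dt); apply Rmult_le_compat_l; [exact Hdt | apply Aminus_nonpos]).
  lra.
Qed.

Theorem mainTheorem12 (h dt : R) (u : grid) (m M : R) :
  0 < h -> 0 < dt -> dt <= Rpower (h ^ 4 / 2) (1/3) ->
  (forall j : Z, m <= u j <= M) ->
  forall i : Z, m <= Phi_step h dt u i <= M.
Proof.
  intros Hh Hdt Hdt_le Hu i.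
  assert (Hcfl : 2 * dt ^ 3 <= h ^ 4).
  { assert (Hh4 : 0 < h ^ 4 / 2) by (apply Rdiv_lt_0_compat; [apply pow_lt |]; lra).
    pose proof (pow3_le_of_le_Rpower_third _ dt Hh4 ltac:(lra) Hdt_le). lra. }
  split.
  - apply Phi_step_ge; try lra; apply Hu.
  - assert (Hopp : - M <= Phi_step h dt (grid_opp u) i)
      by (apply Phi_step_ge; try lra; unfold grid_opp; apply Ropp_le_contravar, Hu).
    rewrite Phi_step_opp in Hopp. lra.
Qed.
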